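(* Let $n\ge 1$. The topologically distinct endstates of Planted Brussels Sprouts of order $n$ are in bijective correspondence with the noncrossing trees on $n$ labeled vertices. The correspondence sends an endstate to the graph on vertex set $\{1,\dots,n\}$ whose edges are the sets $\{i,j\}$ such that some arc of the game joined two arms with short labels $i$ and $j$.
   Context: Planted Brussels Sprouts of order $n$: start with a closed disk with $n$ marked points on its boundary circle, labeled $1,\dots,n$ in clockwise order. Attached to each marked point is an arm, a short segment pointing into the interior of the disk; these arms are free. A move consists of two steps. First, choose two free arms and join their free ends by a simple curve (an arc) in the disk that does not intersect any previously drawn arc or arm; the two joined arms cease to be free. Second, mark a point (a notch) on the arc, from which two new free arms emanate, one on each side of the arc. The game ends when no move is possible, and the final configuration is called an endstate. Long labels: the original arm at point $i$ has long label $i$. If an arc joins arms with long labels $\alpha$ and $\beta$, the two new arms receive long labels $(\alpha,\beta)$ and $(\beta,\alpha)$, placed so that, going clockwise around the notch, one sees the old arm $\alpha$, the new arm $(\alpha,\beta)$, the old arm $\beta$, and the new arm $(\beta,\alpha)$. Two endstates are topologically equivalent (considered the same) iff some homeomorphism of the disk carries one to the other preserving long labels; equivalently, iff they have the same set of long labels. Short labels: the original arm at point $i$ has short label $i$. If an arc joins arms with short labels $i$ and $j$, the two new arms receive short labels $i$ and $j$, placed so that, going clockwise around the notch, one sees the old arm $i$, the new arm $i$, the old arm $j$, and the new arm $j$. A noncrossing tree on $n$ labeled vertices is a tree on vertices $1,\dots,n$ with the following property: when the vertices are placed in increasing clockwise order on a circle and the edges are drawn as chords, no two distinct edges intersect in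 their interiors. *)

From Stdlib Require Import List Arith Relations.
Import ListNotations.

(** Long labels: the original arm at point i has label [Base i]; an arc
    joining arms alpha, beta creates arms [Pair alpha beta], [Pair beta alpha]. *)
Inductive lab : Type :=
| Base : nat -> lab
| Pair : lab -> lab -> lab.

(** Short label.  The new arm (alpha,beta) is the one seen clockwise right
    after the old arm alpha around the notch, so it receives alpha's short
    label: short (alpha,beta) = short alpha. *)
Fixpoint short (l : lab) : nat :=
  match l with
  | Base i => i
  | Pair a _ => short a
  end.

(** Every face (region) of the disk is a topological disk;
    it is recorded by the list of the free arms pointing into it, in the
    clockwise order in which they are met along its boundary (a cyclic
    sequence, the list being any linearization).  [arcs] records, for every
    move made, the pair of (long labels of) arms joined by the arc. *)
Record state : Type := mkState { faces : list (list lab); arcs : list (lab * lab) }.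

Definition init (n : nat) : state := mkState [map Base (seq 1 n)] [].

(** One move: pick a face, rotate its cyclic arm sequence to the form
    a :: X ++ b :: Y (clockwise), join arms a and b by an arc.  The arc splits
    the face in two: the side met clockwise from a to b contains the arms X
    and the new arm (a,b); the other side contains Y and the new arm (b,a). *)
Inductive step : state -> state -> Prop :=
| step_intro : forall (F1 F2 : list (list lab)) (u v X Y : list lab)
                      (a b : lab) (A : list (lab * lab)),
    v ++ u = a :: X ++ b :: Y ->
    step (mkState (F1 ++ (u ++ v) :: F2) A)
         (mkState (F1 ++ (X ++ [Pair a b]) :: (Y ++ [Pair b a]) :: F2) ((a, b) :: A)).

Definition reachable (n : nat) (s : state) : Prop := clos_refl_trans state step (init n) s.

Definition endstate (n : nat) (s : state) : Prop :=
  reachable n s /\ forall s', ~ step s s'.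

Definition long_labels (n : nat) (s : state) (l : lab) : Prop :=
  (exists i, 1 <= i <= n /\ l = Base i) \/
  (exists a b, In (a, b) (arcs s) /\ (l = Pair a b \/ l = Pair b a)).

(** Topological equivalence of endstates (= same set of long labels). *)
Definition top_equiv (n : nat) (s t : state) : Prop :=
  forall l, long_labels n s l <-> long_labels n t l.

Definition graph_of (s : state) (i j : nat) : Prop :=
  exists a b, In (a, b) (arcs s) /\
    ((short a = i /\ short b = j) \/ (short a = j /\ short b = i)).

Fixpoint walk (E : nat -> nat -> Prop) (l : list nat) : Prop :=
  match l with
  | x :: ((y :: _) as t) => E x y /\ walk E t
  | _ => True
  end.

Definition noncrossing_tree (n : nat) (E : nat -> nat -> Prop) : Prop :=
  (forall i j, E i j -> E j i) /\
  (forall i j, E i j -> 1 <= i <= n /\ 1 <= j <= n /\ i <> j) /\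
  (forall i j, 1 <= i <= n -> 1 <= j <= n -> clos_refl_trans nat E i j) /\
  (forall x l, NoDup (x :: l) -> 2 <= length l -> ~ walk E (x :: l ++ [x])) /\
  (forall a b c d, E a b -> E c d -> ~ (a < c /\ c < b /\ b < d)).

From Stdlib Require Import List Arith Relations Lia Permutation Classical IndefiniteDescription.
Import ListNotations.

(** In every reachable position each boundary point has exactly one free
    arm, the arms around a face carry distinct short labels in clockwise order, and a
    move in a face draws a chord between two of its labels that separates the others.
    Hence the drawn graph stays a noncrossing forest, glued into a connected graph by the
    faces; in an endstate every face has at most one arm, so the graph is a noncrossing
    tree.  Around a boundary point the arcs are drawn in the clockwise order of their other
    ends, so the graph determines every long label.  Conversely, inside a face containing
    an edge of a given noncrossing tree, following the clockwise-farthest neighbour must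
    turn back on an edge [ij] whose ends are mutually farthest; drawing [ij] keeps every
    missing tree edge inside a single face, and the number of arms still to be joined
    decreases. *)

(** Going clockwise (upwards, wrapping around) from [x], one meets [z] strictly before
    [y]; for [x = y] this holds for every [z <> x]. *)
Definition cyc_between (x y z : nat) : Prop :=
  (x < y /\ x < z /\ z < y) \/ (y <= x /\ (x < z \/ z < y)).

Definition joined (A : list (lab * lab)) (c d : lab) : Prop := In (c, d) A \/ In (d, c) A.

Definition arc_graph (A : list (lab * lab)) (i j : nat) : Prop :=
  exists a b, In (a, b) A /\ ((short a = i /\ short b = j) \/ (short a = j /\ short b = i)).

Lemma joined_sym A c d : joined A c d -> joined A d c.
Proof. unfold joined; tauto. Qed.

Lemma joined_nil c d : ~ joined [] c d.
Proof. intros [H|H]; inversion H. Qed.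

Lemma joined_cons a b A c d : joined ((a, b) :: A) c d <->
  (c = a /\ d = b) \/ (c = b /\ d = a) \/ joined A c d.
Proof.
  unfold joined; simpl; split.
  - intros [[H|H]|[H|H]]; try (inversion H; subst; tauto); tauto.
  - intros [[-> ->]|[[-> ->]|[H|H]]]; tauto.
Qed.

Lemma arc_graph_joined A i j :
  arc_graph A i j <-> exists c d, joined A c d /\ short c = i /\ short d = j.
Proof.
  unfold arc_graph, joined; split.
  - intros (a & b & H & [[H1 H2]|[H1 H2]]).
    + exists a, b; auto.
    + exists b, a; auto.
  - intros (c & d & [H|H] & H1 & H2).
    + exists c, d; auto.
    + exists d, c; auto.
Qed.

Lemma arc_graph_sym A i j : arc_graph A i j -> arc_graph A j i.
Proof. intros (a & b & H & HH); exists a, b; split; auto; tauto. Qed.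

Lemma arc_graph_nil i j : ~ arc_graph [] i j.
Proof. intros (a & b & H & _); inversion H. Qed.

Lemma arc_graph_cons a b A i j : arc_graph ((a, b) :: A) i j <->
  (short a = i /\ short b = j) \/ (short a = j /\ short b = i) \/ arc_graph A i j.
Proof.
  unfold arc_graph; split.
  - intros (c & d & [H|H] & HH).
    + inversion H; subst; tauto.
    + right; right; exists c, d; auto.
  - intros [H|[H|(c & d & H & HH)]].
    + exists a, b; simpl; auto.
    + exists a, b; simpl; auto.
    + exists c, d; simpl; auto.
Qed.

(** The arm [y] was created after [x], at the same boundary point, through a chain of
    notches each placing the new arm clockwise after the old one. *)
Fixpoint on_left_spine (x y : lab) : Prop :=
  match y with Base _ => False | Pair y0 _ => y0 = x \/ on_left_spine x y0 end.

Fixpoint lab_size (l : lab) : nat :=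
  match l with Base _ => 1 | Pair a b => S (lab_size a + lab_size b) end.

Lemma on_left_spine_size x y : on_left_spine x y -> lab_size x < lab_size y.
Proof.
  induction y; simpl; [tauto|]. intros [->|H]; [lia|]. apply IHy1 in H; lia.
Qed.

Lemma on_left_spine_cycle c cs e : on_left_spine c cs -> ~ on_left_spine cs (Pair c e).
Proof.
  intros H1 [->|H2].
  - apply on_left_spine_size in H1; lia.
  - apply on_left_spine_size in H1; apply on_left_spine_size in H2; lia.
Qed.

Fixpoint precedes (l : list nat) (p q : nat) : Prop :=
  match l with [] => False | x :: l' => (x = p /\ In q l') \/ precedes l' p q end.

Definition increasing (l : list nat) : Prop := forall p q, precedes l p q -> p < q.

Definition cyc_sorted (L : list nat) : Prop :=
  exists l1 l2, L = l1 ++ l2 /\ increasing (l2 ++ l1).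

Lemma precedes_app l1 l2 p q : precedes (l1 ++ l2) p q <->
  precedes l1 p q \/ (In p l1 /\ In q l2) \/ precedes l2 p q.
Proof.
  induction l1 as [|x l1 IH]; simpl.
  - tauto.
  - rewrite IH, in_app_iff. split.
    + intros [[-> [H|H]]|[H|[[H1 H2]|H]]]; tauto.
    + intros [[[-> H]|H]|[[[->|H1] H2]|H]]; tauto.
Qed.

Lemma increasing_app_inv a b c : increasing (a ++ b ++ c) -> increasing (a ++ c).
Proof.
  unfold increasing; intros H p q Hb; apply H.
  rewrite precedes_app in Hb |- *. rewrite precedes_app, in_app_iff. tauto.
Qed.

Lemma increasing_app_l a b : increasing (a ++ b) -> increasing a.
Proof. unfold increasing; intros H p q Hb; apply H; rewrite precedes_app; auto. Qed.

Lemma increasing_app_r a b : increasing (a ++ b) -> increasing b.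
Proof. unfold increasing; intros H p q Hb; apply H; rewrite precedes_app; auto. Qed.

Lemma increasing_seq s len : increasing (seq s len).
Proof.
  revert s; induction len; intros s p q; simpl; [tauto|].
  intros [[-> H]|H].
  - apply in_seq in H; lia.
  - apply (IHlen (S s)); auto.
Qed.

Lemma cyc_sorted_seq s len : cyc_sorted (seq s len).
Proof. exists (seq s len), []. rewrite app_nil_r; split; auto. apply increasing_seq. Qed.

Lemma cyc_sorted_rot u v : cyc_sorted (u ++ v) -> cyc_sorted (v ++ u).
Proof.
  intros (l1 & l2 & Heq & Hs).
  destruct (app_eq_app _ _ _ _ Heq) as (w & [[H1 H2]|[H1 H2]]); subst.
  - exists (v ++ l1), w. split; [now rewrite app_assoc|].
    rewrite <- app_assoc in Hs. exact Hs.
  - exists w, (l2 ++ u). split; [now rewrite <- app_assoc|].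
    rewrite <- app_assoc. exact Hs.
Qed.

Lemma cyc_sorted_prefix w q : cyc_sorted (w ++ q) -> cyc_sorted w.
Proof.
  intros (l1 & l2 & Heq & Hs).
  destruct (app_eq_app _ _ _ _ Heq) as (t & [[H1 H2]|[H1 H2]]); subst.
  - exists l1, t. split; auto. apply (increasing_app_inv t q l1).
    rewrite <- app_assoc in Hs. exact Hs.
  - exists w, []. split; [now rewrite app_nil_r|]. simpl.
    apply increasing_app_r in Hs. apply increasing_app_l in Hs. exact Hs.
Qed.

Lemma precedes_In_l l p q : precedes l p q -> In p l.
Proof. induction l; simpl; [tauto|]. intros [[-> _]|H]; auto. Qed.

Lemma precedes_In_r l p q : precedes l p q -> In q l.
Proof. induction l; simpl; [tauto|]. intros [[_ H]|H]; auto. Qed.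

Lemma cyc_sorted_threshold L : cyc_sorted L -> exists t, forall p q, precedes L p q ->
  (p < q /\ (p < t -> q < t)) \/ (q < t /\ t <= p).
Proof.
  intros (l1 & l2 & -> & Hs).
  assert (Hl1 : forall p q, precedes l1 p q -> p < q)
    by (intros p q Hb; apply Hs; rewrite precedes_app; auto).
  assert (Hl2 : forall p q, precedes l2 p q -> p < q)
    by (intros p q Hb; apply Hs; rewrite precedes_app; auto).
  assert (Hx : forall p q, In p l2 -> In q l1 -> p < q)
    by (intros p q H1 H2; apply Hs; rewrite precedes_app; auto).
  destruct l1 as [|c l1'].
  - exists 0. intros p q Hb. left. simpl in Hb. split; [apply Hl2; auto|lia].
  - exists c. intros p q Hb. rewrite precedes_app in Hb.
    assert (Hc : forall z, In z (c :: l1') -> c <= z).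
    { intros z [->|Hz]; [lia|]. assert (c < z) by (apply Hl1; simpl; auto). lia. }
    destruct Hb as [Hb|[[H1 H2]|Hb]].
    + left. pose proof (Hc p (precedes_In_l _ _ _ Hb)). split; [auto|lia].
    + right. specialize (Hc p H1). specialize (Hx q c H2 (or_introl eq_refl)). lia.
    + left. split; [auto|]. intros _. apply (Hx q c (precedes_In_r _ _ _ Hb)). simpl; auto.
Qed.

Lemma cyc_sorted_split a X b Y : cyc_sorted (a :: X ++ b :: Y) ->
  (forall x, In x X -> cyc_between a b x) /\ (forall y, In y Y -> cyc_between b a y).
Proof.
  intros Hc. destruct (cyc_sorted_threshold _ Hc) as (t & Ht).
  assert (Hab : precedes (a :: X ++ b :: Y) a b)
    by (simpl; left; split; auto; apply in_app_iff; simpl; auto).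
  pose proof (Ht _ _ Hab) as Fab.
  split.
  - intros x Hx.
    assert (H1 : precedes (a :: X ++ b :: Y) a x)
      by (simpl; left; split; auto; apply in_app_iff; auto).
    assert (H2 : precedes (a :: X ++ b :: Y) x b).
    { simpl; right. rewrite precedes_app. right; left. simpl; auto. }
    pose proof (Ht _ _ H1); pose proof (Ht _ _ H2). unfold cyc_between; lia.
  - intros y Hy.
    assert (H1 : precedes (a :: X ++ b :: Y) a y)
      by (simpl; left; split; auto; apply in_app_iff; simpl; auto).
    assert (H2 : precedes (a :: X ++ b :: Y) b y).
    { simpl; right. rewrite precedes_app. right; right. simpl; auto. }
    pose proof (Ht _ _ H1); pose proof (Ht _ _ H2). unfold cyc_between; lia.
Qed.

Lemma walk_cons2 (E : nat -> nat -> Prop) x y t :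
  walk E (x :: y :: t) <-> E x y /\ walk E (y :: t).
Proof. simpl. tauto. Qed.

Lemma walk_app (E : nat -> nat -> Prop) l1 l2 : walk E (l1 ++ l2) <->
  walk E l1 /\ walk E l2 /\ (l1 <> [] -> l2 <> [] -> E (last l1 0) (hd 0 l2)).
Proof.
  induction l1 as [|x l1 IH].
  - simpl. split; [intros H; repeat split; auto; intros C; congruence| tauto].
  - destruct l1 as [|y l1].
    + destruct l2 as [|z l2]; simpl.
      * split; [intros _; repeat split; auto; intros _ C; congruence|tauto].
      * split; [intros [H1 H2]; repeat split; auto|].
        intros (_ & H2 & H3); split; auto; apply H3; congruence.
    + change ((x :: y :: l1) ++ l2) with (x :: y :: (l1 ++ l2)).
      rewrite walk_cons2. change (y :: l1 ++ l2) with ((y :: l1) ++ l2). rewrite IH.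
      rewrite walk_cons2. change (last (x :: y :: l1) 0) with (last (y :: l1) 0). split.
      * intros (H1 & H2 & H3 & H4). repeat split; auto. intros _ Hne. apply H4; congruence.
      * intros ((H1 & H2) & H3 & H4). repeat split; auto. intros _ Hne. apply H4; congruence.
Qed.

Lemma walk_cycle (E : nat -> nat -> Prop) x l : walk E (x :: l ++ [x]) ->
  walk E (x :: l) /\ E (last (x :: l) 0) (hd 0 (x :: l)).
Proof.
  intros H. change (x :: l ++ [x]) with ((x :: l) ++ [x]) in H.
  apply walk_app in H. destruct H as (H1 & _ & H3). split; auto. apply H3; congruence.
Qed.

Lemma walk_map_seq (E : nat -> nat -> Prop) (xs : nat -> nat) :
  (forall t, E (xs t) (xs (S t))) -> forall m p, walk E (map xs (seq p m)).
Proof.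
  intros H. induction m as [|m IH]; intros p; [simpl; auto|].
  simpl. destruct m as [|m]; [simpl; auto|].
  specialize (IH (S p)). simpl in IH |- *. split; auto.
Qed.

Lemma clos_rt_mono (R R' : nat -> nat -> Prop) x y :
  (forall u w, R u w -> clos_refl_trans nat R' u w) ->
  clos_refl_trans nat R x y -> clos_refl_trans nat R' x y.
Proof.
  intros H Hr; induction Hr.
  - apply H; auto.
  - apply rt_refl.
  - eapply rt_trans; eauto.
Qed.

Lemma NoDup_app_disjoint {T} (l1 l2 : list T) x : NoDup (l1 ++ l2) -> In x l1 -> ~ In x l2.
Proof.
  induction l1 as [|y l1 IH]; simpl; [tauto|].
  intros H [->|Hx] Hx2; inversion H; subst.
  - apply H2. apply in_app_iff; auto.
  - eapply IH; eauto.
Qed.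

Lemma last_In (l : list nat) d : l <> [] -> In (last l d) l.
Proof.
  induction l as [|x l IH]; [congruence|]. intros _. destruct l as [|y l]; simpl; auto.
  right. apply IH. congruence.
Qed.

Lemma hd_In (l : list nat) d : l <> [] -> In (hd d l) l.
Proof. destruct l; [congruence|simpl; auto]. Qed.

Lemma last_app_nonnil (l1 l2 : list nat) d : l2 <> [] -> last (l1 ++ l2) d = last l2 d.
Proof.
  intros H. induction l1 as [|x l1 IH]; simpl; auto.
  rewrite IH. destruct l1; simpl; destruct l2; try congruence; auto.
Qed.

Lemma hd_app_nonnil (l1 l2 : list nat) d : l1 <> [] -> hd d (l1 ++ l2) = hd d l1.
Proof. destruct l1; simpl; congruence. Qed.

Lemma NoDup_hd_last (l : list nat) : NoDup l -> l <> [] -> hd 0 l = last l 0 -> length l = 1.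
Proof.
  intros HN Hne Hhl. destruct l as [|x l]; [congruence|].
  destruct l as [|y l]; auto. exfalso. simpl in Hhl.
  apply NoDup_cons_iff in HN as [Hx _]. apply Hx. rewrite Hhl.
  apply (last_In (y :: l) 0). congruence.
Qed.

Definition acyclic (G : nat -> nat -> Prop) : Prop :=
  forall P, NoDup P -> 3 <= length P -> walk G P -> ~ G (last P 0) (hd 0 P).

Definition chord (i j x y : nat) : Prop := (x = i /\ y = j) \/ (x = j /\ y = i).

Lemma no_cycle_of_acyclic (G : nat -> nat -> Prop) :
  acyclic G -> forall x l, NoDup (x :: l) -> 2 <= length l -> ~ walk G (x :: l ++ [x]).
Proof.
  intros H x l HN HL Hw. apply walk_cycle in Hw as [Hw Hc].
  apply (H (x :: l) HN ltac:(simpl; lia) Hw Hc).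
Qed.

Lemma noncrossing_sides (E : nat -> nat -> Prop) p q z z' :
  (forall a b c d, E a b -> E c d -> ~ (a < c /\ c < b /\ b < d)) ->
  (forall x y, E x y -> E y x) -> p <> q ->
  E p q -> E z z' -> cyc_between p q z -> cyc_between q p z' -> False.
Proof.
  intros Hnc Hs Hpq H1 H2 C1 C2.
  pose proof (Hs _ _ H1) as H1'; pose proof (Hs _ _ H2) as H2'.
  pose proof (Hnc _ _ _ _ H1 H2); pose proof (Hnc _ _ _ _ H1 H2');
  pose proof (Hnc _ _ _ _ H1' H2); pose proof (Hnc _ _ _ _ H1' H2');
  pose proof (Hnc _ _ _ _ H2 H1); pose proof (Hnc _ _ _ _ H2' H1);
  pose proof (Hnc _ _ _ _ H2 H1'); pose proof (Hnc _ _ _ _ H2' H1').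
  unfold cyc_between in *; lia.
Qed.

Lemma walk_crosses_chord (G : nat -> nat -> Prop) p q M : p <> q -> M <> [] -> walk G M ->
  (forall z, In z M -> z <> p /\ z <> q) ->
  cyc_between q p (hd 0 M) -> cyc_between p q (last M 0) ->
  exists z z', G z z' /\ cyc_between q p z /\ cyc_between p q z'.
Proof.
  intros Hpq. induction M as [|x M IH]; [congruence|]. intros _ Hw Hin H1 H2.
  destruct M as [|y M].
  - simpl in *. exfalso. unfold cyc_between in *; lia.
  - rewrite walk_cons2 in Hw. destruct Hw as [Hxy Hw].
    assert (Hy : y <> p /\ y <> q) by (apply Hin; simpl; auto).
    assert (Hc : cyc_between p q y \/ cyc_between q p y) by (unfold cyc_between; lia).
    destruct Hc as [Hc|Hc].
    + exists x, y; simpl in H1; auto.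
    + apply IH; auto; [congruence| intros z Hz; apply Hin; simpl; auto].
Qed.

(** A simple walk from [p] to [q] leaves [p] into the arc [(q, p)] and reaches [q] from
    the arc [(p, q)], so one of its edges crosses the chord [pq]. *)
Lemma no_walk_around_chord (G : nat -> nat -> Prop) p q : p <> q ->
  (forall x y, G x y -> G y x) ->
  (forall z, G p z -> cyc_between p z q) -> (forall z, G q z -> cyc_between q z p) ->
  (forall z z', G z z' -> cyc_between q p z -> cyc_between p q z' -> False) ->
  forall Q, NoDup Q -> 3 <= length Q -> walk G Q -> hd 0 Q = p -> last Q 0 = q -> False.
Proof.
  intros Hpq Hs Hp Hq Hx Q HN HL Hw Hh Hl.
  destruct Q as [|x rest]; [simpl in HL; lia|]. simpl in Hh; subst x.
  assert (Hr : rest <> []) by (intro; subst; simpl in HL; lia).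
  destruct (exists_last Hr) as (M & z & ->).
  assert (HM : M <> []) by (intro; subst; simpl in HL; lia).
  change (p :: M ++ [z]) with ((p :: M) ++ [z]) in Hw, HN, Hl.
  rewrite last_last in Hl. subst z.
  apply walk_app in Hw. destruct Hw as (Hw1 & _ & Hj).
  specialize (Hj ltac:(congruence) ltac:(congruence)).
  destruct M as [|m M']; [congruence|].
  rewrite walk_cons2 in Hw1. destruct Hw1 as [Hpm Hw1].
  change (last (p :: m :: M') 0) with (last (m :: M') 0) in Hj.
  assert (Hnd : forall z, In z (m :: M') -> z <> p /\ z <> q).
  { intros z Hz. split.
    - intros ->. apply NoDup_app_remove_r in HN. inversion HN; subst. contradiction.
    - intros ->. apply (NoDup_app_disjoint (p :: m :: M') [q] q HN); simpl; auto. }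
  pose proof (Hp _ Hpm) as C1. pose proof (Hq _ (Hs _ _ Hj)) as C2.
  assert (A1 : cyc_between q p (hd 0 (m :: M'))).
  { simpl. specialize (Hnd m (or_introl eq_refl)). unfold cyc_between in *; lia. }
  assert (A2 : cyc_between p q (last (m :: M') 0)).
  { pose proof (Hnd _ (last_In (m :: M') 0 ltac:(congruence))).
    unfold cyc_between in *; lia. }
  destruct (walk_crosses_chord G p q (m :: M') Hpq ltac:(congruence) Hw1 Hnd A1 A2)
    as (z & z' & Hzz & Cz & Cz').
  eauto.
Qed.

Lemma walk_split_at_chord (G G' : nat -> nat -> Prop) i j :
  (forall x y, G' x y -> chord i j x y \/ G x y) ->
  forall P, walk G' P -> walk G P \/ exists P1 P2, P = P1 ++ P2 /\ P1 <> [] /\ P2 <> [] /\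
     chord i j (last P1 0) (hd 0 P2) /\ walk G' P1 /\ walk G' P2.
Proof.
  intros HG. induction P as [|x P IH]; intros Hw; [left; simpl; auto|].
  destruct P as [|y P]; [left; simpl; auto|].
  rewrite walk_cons2 in Hw. destruct Hw as [Hxy Hw].
  destruct (HG _ _ Hxy) as [Hn|Hg].
  - right. exists [x], (y :: P). repeat split; try congruence; simpl; auto.
  - destruct (IH Hw) as [Hw'|(P1 & P2 & Heq & H1 & H2 & Hn & Hw1 & Hw2)].
    + left. rewrite walk_cons2; auto.
    + right. exists (x :: P1), P2.
      split; [rewrite Heq; reflexivity|]. split; [congruence|]. split; [auto|].
      destruct P1 as [|z P1]; [congruence|].
      split; [simpl; destruct P1; auto|]. split; [|auto].
      simpl in Heq. injection Heq as Hzy. subst z.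
      rewrite walk_cons2. split; auto.
Qed.

Lemma walk_avoiding_chord (G G' : nat -> nat -> Prop) i j :
  (forall x y, G' x y -> chord i j x y \/ G x y) ->
  forall P, walk G' P -> (~ In i P \/ ~ In j P) -> walk G P.
Proof.
  intros HG. induction P as [|x P IH]; intros Hw Hn; [simpl; auto|].
  destruct P as [|y P]; [simpl; auto|].
  rewrite walk_cons2 in Hw |- *. destruct Hw as [Hxy Hw].
  split.
  - destruct (HG _ _ Hxy) as [[[-> ->]|[-> ->]]|H]; auto; exfalso; simpl in Hn; tauto.
  - apply IH; auto. simpl in Hn. tauto.
Qed.

Lemma chord_twice_cycle_length i j P1 P2 : NoDup (P1 ++ P2) -> P1 <> [] -> P2 <> [] ->
  chord i j (last P1 0) (hd 0 P2) -> chord i j (last P2 0) (hd 0 P1) -> length (P1 ++ P2) = 2.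
Proof.
  intros HN H1 H2 Hn Hc.
  assert (Hd : forall x, In x P1 -> In x P2 -> False)
    by (intros; eapply NoDup_app_disjoint; eauto).
  pose proof (last_In P1 0 H1) as HL1. pose proof (last_In P2 0 H2) as HL2.
  assert (E : last P2 0 = hd 0 P2 /\ last P1 0 = hd 0 P1).
  { unfold chord in Hn, Hc.
    destruct Hn as [[E1 E2]|[E1 E2]]; destruct Hc as [[E3 E4]|[E3 E4]];
      try (split; congruence); exfalso; rewrite E3, <- E1 in HL2; eauto. }
  destruct E as [E1 E2].
  assert (length P1 = 1) by (apply NoDup_hd_last; eauto using NoDup_app_remove_r).
  assert (length P2 = 1) by (apply NoDup_hd_last; eauto using NoDup_app_remove_l).
  rewrite length_app. lia.
Qed.

Lemma acyclic_add_chord (G G' : nat -> nat -> Prop) i j : i <> j ->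
  (forall x y, G' x y <-> chord i j x y \/ G x y) -> acyclic G ->
  (forall Q p q, chord i j p q -> NoDup Q -> 3 <= length Q -> walk G Q ->
     hd 0 Q = p -> last Q 0 = q -> False) ->
  acyclic G'.
Proof.
  intros Hij HG Hold Hpath P HN HL Hw Hc.
  assert (HG1 : forall x y, G' x y -> chord i j x y \/ G x y) by (intros; apply HG; auto).
  destruct (walk_split_at_chord G G' i j HG1 P Hw)
    as [Hw'|(P1 & P2 & -> & H1 & H2 & Hn & Hw1 & Hw2)].
  - apply HG in Hc. destruct Hc as [Hn|Hc].
    + apply (Hpath P (hd 0 P) (last P 0)); auto. unfold chord in *. tauto.
    + eapply Hold; eauto.
  - rewrite last_app_nonnil in Hc by auto. rewrite hd_app_nonnil in Hc by auto.
    assert (Hd : forall x, In x P1 -> In x P2 -> False)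
      by (intros; eapply NoDup_app_disjoint; eauto).
    pose proof (last_In P1 0 H1) as HL1. pose proof (hd_In P2 0 H2) as HH2.
    assert (Hw1' : walk G P1).
    { apply (walk_avoiding_chord G G' i j HG1 P1 Hw1). unfold chord in Hn.
      destruct Hn as [[E1 E2]|[E1 E2]]; [right|left]; intro Hin; rewrite <- E2 in Hin; eauto. }
    assert (Hw2' : walk G P2).
    { apply (walk_avoiding_chord G G' i j HG1 P2 Hw2). unfold chord in Hn.
      destruct Hn as [[E1 E2]|[E1 E2]]; [left|right]; intro Hin; rewrite <- E1 in Hin; eauto. }
    apply HG in Hc. destruct Hc as [Hc|Hc].
    + pose proof (chord_twice_cycle_length i j P1 P2 HN H1 H2 Hn Hc). lia.
    + eapply (Hpath (P2 ++ P1) (hd 0 P2) (last P1 0)).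
      * unfold chord in *; tauto.
      * eapply Permutation_NoDup; [apply Permutation_app_comm|exact HN].
      * rewrite length_app in *; lia.
      * apply walk_app. repeat split; auto.
      * apply hd_app_nonnil; auto.
      * apply last_app_nonnil; auto.
Qed.

Definition shorts (f : list lab) : list nat := map short f.

Definition same_face (F : list (list lab)) (x y : nat) : Prop :=
  exists f, In f F /\ In x (shorts f) /\ In y (shorts f).

Lemma shorts_init n : shorts (map Base (seq 1 n)) = seq 1 n.
Proof. unfold shorts. rewrite map_map. apply map_id. Qed.

(** Each boundary point keeps exactly one free arm, and the short labels met around a
    face are in clockwise order.  An arc [ij] leaves the free arm at [i] on the side of
    the arc going clockwise from [i] to [j] ([face_beside_arc]).  At a boundary point, an
    arc [ij'] is older than an arc [ij] when [j'] comes clockwise after [j]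
    ([arcs_ordered_at_point]); this pins down the long labels in terms of the short
    ones. *)
Record invariant (n : nat) (s : state) : Prop := {
  free_shorts_perm : Permutation (map short (concat (faces s))) (seq 1 n);
  face_cyc_sorted : forall f, In f (faces s) -> cyc_sorted (shorts f);
  arc_ends_proper : forall c d, joined (arcs s) c d ->
    short c <> short d /\ 1 <= short c <= n /\ 1 <= short d <= n;
  face_beside_arc : forall c d f x, joined (arcs s) c d -> In f (faces s) ->
    In (short c) (shorts f) -> In x (shorts f) -> x <> short c ->
    cyc_between (short c) (short d) x;
  arcs_ordered_at_point : forall c d c' d', joined (arcs s) c d -> joined (arcs s) c' d' ->
    short c = short c' -> cyc_between (short d) (short c) (short d') -> on_left_spine c' c;
  free_arm_newest : forall al c d, In al (concat (faces s)) -> joined (arcs s) c d ->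
    short c = short al -> on_left_spine c al;
  free_pair_joined : forall x y, In (Pair x y) (concat (faces s)) -> joined (arcs s) x y;
  arc_pair_joined : forall x y d, joined (arcs s) (Pair x y) d -> joined (arcs s) x y;
  arc_pair_side : forall x y d, joined (arcs s) (Pair x y) d ->
    cyc_between (short d) (short x) (short y);
  graph_noncrossing : forall p q r t, arc_graph (arcs s) p q -> arc_graph (arcs s) r t ->
    ~ (p < r /\ r < q /\ q < t);
  arc_face_noncrossing : forall p q f x y, arc_graph (arcs s) p q -> In f (faces s) ->
    In x (shorts f) -> In y (shorts f) -> ~ (cyc_between p q x /\ cyc_between q p y);
  face_face_noncrossing : forall f f' x y p q, In f (faces s) -> In f' (faces s) ->
    In x (shorts f) -> In y (shorts f) -> x <> y -> In p (shorts f') -> In q (shorts f') ->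
    ~ In p (shorts f) -> ~ (cyc_between x y p /\ cyc_between y x q);
  graph_face_connected : forall x y, 1 <= x <= n -> 1 <= y <= n ->
    clos_refl_trans nat (fun p q => arc_graph (arcs s) p q \/ same_face (faces s) p q) x y;
  graph_acyclic : acyclic (arc_graph (arcs s))
}.

Lemma invariant_init n : invariant n (init n).
Proof.
  assert (Hface : forall f, In f (faces (init n)) -> shorts f = seq 1 n)
    by (intros f [<-|[]]; apply shorts_init).
  constructor; simpl; try (intros; exfalso; eapply joined_nil; eassumption);
    try (intros; exfalso; eapply arc_graph_nil; eassumption).
  - rewrite app_nil_r. apply Permutation_refl'. apply shorts_init.
  - intros f Hf. rewrite (Hface f Hf). apply cyc_sorted_seq.
  - intros x y H. rewrite app_nil_r in H. apply in_map_iff in H as (z & H & _). discriminate.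
  - intros f f' x y p q Hf Hf' _ _ _ Hp _ Hnp.
    rewrite (Hface f Hf) in Hnp. rewrite (Hface f' Hf') in Hp. contradiction.
  - intros x y Hx Hy. apply rt_step. right. exists (map Base (seq 1 n)).
    rewrite shorts_init, !in_seq. split; [simpl; auto|lia].
  - intros P _ HP Hw. destruct P as [|x [|y t]]; simpl in HP; try lia.
    destruct Hw as [H _]. exfalso; eapply arc_graph_nil; eauto.
Qed.

Definition face_edges (E : nat -> nat -> Prop) (f : list lab) (x y : nat) : Prop :=
  E x y /\ In x (shorts f) /\ In y (shorts f).

Record follows_tree (n : nat) (E : nat -> nat -> Prop) (s : state) : Prop := {
  follows_reachable : reachable n s;
  follows_arcs_in_tree : forall x y, arc_graph (arcs s) x y -> E x y;
  follows_pending_in_face : forall x y, E x y -> ~ arc_graph (arcs s) x y ->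
    same_face (faces s) x y;
  follows_face_connected : forall f, In f (faces s) -> forall x y, In x (shorts f) ->
    In y (shorts f) -> clos_refl_trans nat (face_edges E f) x y
}.

Definition farthest (E : nat -> nat -> Prop) (L : list nat) (i j : nat) : Prop :=
  forall y, In y L -> E i y -> y <> j -> cyc_between i j y.

Lemma clos_rt_split_sides (R R1 R2 : nat -> nat -> Prop) (S1 S2 : nat -> Prop) i j :
  (forall z, S1 z -> S2 z -> False) ->
  (forall x y, R x y -> (S1 x \/ S2 x) /\ (S1 y \/ S2 y)) ->
  (forall x y, R x y -> S1 x -> S1 y -> R1 x y) -> (forall x y, R x y -> S2 x -> S2 y -> R2 x y) ->
  (forall x y, R x y -> S1 x -> S2 y -> x = i /\ y = j) ->
  (forall x y, R x y -> S2 x -> S1 y -> x = j /\ y = i) ->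
  forall x y, clos_refl_trans_1n nat R x y ->
   (S1 x -> S1 y -> clos_refl_trans nat R1 x y) /\
   (S1 x -> S2 y -> clos_refl_trans nat R1 x i /\ clos_refl_trans nat R2 j y) /\
   (S2 x -> S1 y -> clos_refl_trans nat R2 x j /\ clos_refl_trans nat R1 i y) /\
   (S2 x -> S2 y -> clos_refl_trans nat R2 x y).
Proof.
  intros Hd Hs H1 H2 H12 H21 x y Hr. induction Hr as [x|x z y Hxz Hzy IH].
  - repeat split; intros; try apply rt_refl; exfalso; eauto.
  - destruct IH as (I1 & I2 & I3 & I4).
    destruct (Hs _ _ Hxz) as [_ [Sz|Sz]].
    + split; [|split; [|split]]; intros Sx Sy.
      * apply rt_trans with z; [apply rt_step; apply H1; auto|auto].
      * destruct (I2 Sz Sy). split; auto.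
        apply rt_trans with z; [apply rt_step; apply H1; auto|auto].
      * destruct (H21 _ _ Hxz Sx Sz) as [-> ->]. split; [apply rt_refl|auto].
      * destruct (H21 _ _ Hxz Sx Sz) as [-> ->]. apply (I2 Sz Sy).
    + split; [|split; [|split]]; intros Sx Sy.
      * destruct (H12 _ _ Hxz Sx Sz) as [-> ->]. apply (I3 Sz Sy).
      * destruct (H12 _ _ Hxz Sx Sz) as [-> ->]. split; [apply rt_refl|auto].
      * destruct (I3 Sz Sy). split; auto.
        apply rt_trans with z; [apply rt_step; apply H2; auto|auto].
      * apply rt_trans with z; [apply rt_step; apply H2; auto|auto].
Qed.

Section Move.

Variables (n : nat) (F1 F2 : list (list lab)) (u v X Y : list lab) (a b : lab)
  (A : list (lab * lab)).
Hypothesis split_face : v ++ u = a :: X ++ b :: Y.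
Hypothesis inv : invariant n (mkState (F1 ++ (u ++ v) :: F2) A).

Local Notation B := (u ++ v).
Local Notation B1 := (X ++ [Pair a b]).
Local Notation B2 := (Y ++ [Pair b a]).
Local Notation others := (concat F1 ++ X ++ Y ++ concat F2).

Lemma split_face_perm : Permutation B (a :: b :: X ++ Y).
Proof.
  eapply perm_trans; [apply Permutation_app_comm|]. rewrite split_face.
  apply perm_skip. apply Permutation_sym, Permutation_middle.
Qed.

Lemma move_arms_perm : Permutation (concat (F1 ++ B :: F2)) (a :: b :: others).
Proof.
  rewrite concat_app. simpl.
  eapply perm_trans; [apply Permutation_app_head, Permutation_app_tail, split_face_perm|].
  simpl. eapply perm_trans; [apply Permutation_sym, Permutation_middle|]. apply perm_skip.
  eapply perm_trans; [apply Permutation_sym, Permutation_middle|]. apply perm_skip.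
  rewrite <- !app_assoc. apply Permutation_refl.
Qed.

Lemma moved_arms_perm :
  Permutation (concat (F1 ++ B1 :: B2 :: F2)) (Pair a b :: Pair b a :: others).
Proof.
  rewrite concat_app. simpl. rewrite <- !app_assoc. simpl. rewrite app_assoc.
  eapply perm_trans; [apply Permutation_sym, Permutation_middle|]. apply perm_skip.
  rewrite app_assoc.
  eapply perm_trans; [apply Permutation_sym, Permutation_middle|]. apply perm_skip.
  rewrite <- !app_assoc. apply Permutation_refl.
Qed.

Lemma move_shorts_NoDup : NoDup (short a :: short b :: map short others).
Proof.
  change (short a :: short b :: map short others) with (map short (a :: b :: others)).
  eapply Permutation_NoDup; [apply Permutation_map, move_arms_perm|].
  eapply Permutation_NoDup; [apply Permutation_sym, (free_shorts_perm _ _ inv)|apply seq_NoDup].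
Qed.

Lemma move_short_range al : In al (concat (F1 ++ B :: F2)) -> 1 <= short al <= n.
Proof.
  intros Hal. assert (Hin : In (short al) (seq 1 n)).
  { eapply Permutation_in; [exact (free_shorts_perm _ _ inv)|]. apply in_map; auto. }
  apply in_seq in Hin. lia.
Qed.

Lemma move_ends_neq : short a <> short b.
Proof.
  intros E. pose proof move_shorts_NoDup as H. inversion H as [|? ? Ha _]; subst.
  apply Ha. rewrite E. simpl; auto.
Qed.

Lemma others_shorts_neq al : In al others -> short al <> short a /\ short al <> short b.
Proof.
  pose proof move_shorts_NoDup as H. inversion H as [|? ? Ha H']; subst.
  inversion H' as [|? ? Hb _]; subst.
  intros Hal. split; intros E; [apply Ha; right|apply Hb]; rewrite <- E; apply in_map; auto.
Qed.

Lemma others_shorts :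
  map short others = map short (concat F1) ++ shorts X ++ shorts Y ++ map short (concat F2).
Proof. unfold shorts. rewrite !map_app. reflexivity. Qed.

Lemma sides_disjoint x : In x (shorts X) -> ~ In x (shorts Y).
Proof.
  pose proof move_shorts_NoDup as H. inversion H as [|? ? _ H']; subst.
  inversion H' as [|? ? _ HN]; subst. rewrite others_shorts in HN.
  apply NoDup_app_remove_l in HN. rewrite app_assoc in HN. apply NoDup_app_remove_r in HN.
  intros Hx. eapply NoDup_app_disjoint; eauto.
Qed.

Lemma move_ends_not_in_sides :
  ~ In (short a) (shorts X) /\ ~ In (short a) (shorts Y) /\
  ~ In (short b) (shorts X) /\ ~ In (short b) (shorts Y).
Proof.
  assert (Hs : forall x, In x (shorts X) \/ In x (shorts Y) -> In x (map short others))
    by (intros x Hx; rewrite others_shorts, !in_app_iff; tauto).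
  assert (Hab := move_shorts_NoDup). inversion Hab as [|? ? Ha H']; subst.
  inversion H' as [|? ? Hb _]; subst.
  repeat split; intro H; [apply Ha|apply Ha|apply Hb|apply Hb]; try right; apply Hs; auto.
Qed.

Lemma split_face_shorts x :
  In x (shorts B) <-> x = short a \/ x = short b \/ In x (shorts X) \/ In x (shorts Y).
Proof.
  unfold shorts. split.
  - intros Hx. eapply Permutation_in in Hx; [|apply Permutation_map, split_face_perm].
    simpl in Hx. rewrite map_app, in_app_iff in Hx. intuition.
  - intros Hx. eapply Permutation_in; [apply Permutation_map, Permutation_sym, split_face_perm|].
    simpl. rewrite map_app, in_app_iff. intuition.
Qed.

Lemma new_face1_shorts x : In x (shorts B1) <-> In x (shorts X) \/ x = short a.
Proof. unfold shorts. rewrite map_app, in_app_iff. simpl. intuition. Qed.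

Lemma new_face2_shorts x : In x (shorts B2) <-> In x (shorts Y) \/ x = short b.
Proof. unfold shorts. rewrite map_app, in_app_iff. simpl. intuition. Qed.

Lemma split_face_cyc_sorted : cyc_sorted (short a :: shorts X ++ short b :: shorts Y).
Proof.
  assert (H := face_cyc_sorted _ _ inv B ltac:(simpl; apply in_app_iff; simpl; auto)).
  unfold shorts in *. rewrite map_app in H. apply cyc_sorted_rot in H.
  rewrite <- map_app, split_face in H. simpl in H. rewrite map_app in H. exact H.
Qed.

Lemma side1_between x : In x (shorts X) -> cyc_between (short a) (short b) x.
Proof. apply (cyc_sorted_split _ _ _ _ split_face_cyc_sorted). Qed.

Lemma side2_between y : In y (shorts Y) -> cyc_between (short b) (short a) y.
Proof. apply (cyc_sorted_split _ _ _ _ split_face_cyc_sorted). Qed.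

Lemma new_faces_cyc_sorted : cyc_sorted (shorts B1) /\ cyc_sorted (shorts B2).
Proof.
  pose proof split_face_cyc_sorted as Hcs.
  change (short a :: shorts X ++ short b :: shorts Y)
    with ((short a :: shorts X) ++ (short b :: shorts Y)) in Hcs.
  unfold shorts. rewrite !map_app. simpl. split.
  - apply cyc_sorted_prefix in Hcs. apply (cyc_sorted_rot [short a]). exact Hcs.
  - apply cyc_sorted_rot, cyc_sorted_prefix in Hcs. apply (cyc_sorted_rot [short b]). exact Hcs.
Qed.

Lemma In_faces_before f : In f (F1 ++ B :: F2) <-> In f F1 \/ In f F2 \/ f = B.
Proof. rewrite in_app_iff. simpl. intuition. Qed.

Lemma In_faces_after f :
  In f (F1 ++ B1 :: B2 :: F2) <-> In f F1 \/ In f F2 \/ f = B1 \/ f = B2.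
Proof. rewrite in_app_iff. simpl. intuition. Qed.

Lemma other_faces_disjoint f x :
  In f F1 \/ In f F2 -> In x (shorts f) -> ~ In x (shorts B).
Proof.
  intros Hf Hx HxB.
  assert (Hx' : In x (map short (concat F1)) \/ In x (map short (concat F2))).
  { unfold shorts in Hx. apply in_map_iff in Hx as (al & <- & Hal).
    destruct Hf as [Hf|Hf]; [left|right]; apply in_map, in_concat; eauto. }
  pose proof move_shorts_NoDup as HN. inversion HN as [|? ? Ha H']; subst.
  inversion H' as [|? ? Hb HNo]; subst. rewrite others_shorts in Ha, Hb, HNo.
  apply split_face_shorts in HxB.
  destruct HxB as [->|[->|HxB]].
  - apply Ha. right. rewrite !in_app_iff. tauto.
  - apply Hb. rewrite !in_app_iff. tauto.
  - destruct Hx' as [Hx'|Hx'].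
    + eapply NoDup_app_disjoint; [exact HNo|exact Hx'|]. rewrite !in_app_iff; tauto.
    + rewrite !app_assoc in HNo. eapply NoDup_app_disjoint; [exact HNo| |exact Hx'].
      rewrite !in_app_iff; tauto.
Qed.

Lemma split_face_In : In B (F1 ++ B :: F2).
Proof. apply In_faces_before; auto. Qed.

Lemma ends_in_split_face : In (short a) (shorts B) /\ In (short b) (shorts B).
Proof. split; apply split_face_shorts; auto. Qed.

Lemma new_faces_in_split_face x : In x (shorts B1) \/ In x (shorts B2) -> In x (shorts B).
Proof. rewrite new_face1_shorts, new_face2_shorts, split_face_shorts. tauto. Qed.

Lemma new_face1_side x : In x (shorts B1) -> x = short a \/ cyc_between (short a) (short b) x.
Proof. rewrite new_face1_shorts. intros [Hx|Hx]; auto using side1_between. Qed.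

Lemma new_face2_side x : In x (shorts B2) -> x = short b \/ cyc_between (short b) (short a) x.
Proof. rewrite new_face2_shorts. intros [Hx|Hx]; auto using side2_between. Qed.

Lemma others_In al : In al others -> In al (concat (F1 ++ B :: F2)).
Proof. intros H. eapply Permutation_in; [apply Permutation_sym, move_arms_perm|simpl; auto]. Qed.

Lemma move_ends_In : In a (concat (F1 ++ B :: F2)) /\ In b (concat (F1 ++ B :: F2)).
Proof. split; eapply Permutation_in; try (apply Permutation_sym, move_arms_perm); simpl; auto. Qed.

Lemma moved_arms_In al : In al (concat (F1 ++ B1 :: B2 :: F2)) ->
  al = Pair a b \/ al = Pair b a \/ In al others.
Proof.
  intros H. eapply Permutation_in in H; [|exact moved_arms_perm].
  destruct H as [H|[H|H]]; auto.
Qed.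

Lemma old_graph_irrefl p q : arc_graph A p q -> p <> q.
Proof.
  intros H. apply arc_graph_joined in H as (c & d & H & <- & <-).
  apply (arc_ends_proper _ _ inv); auto.
Qed.

Local Notation s' := (mkState (F1 ++ B1 :: B2 :: F2) ((a, b) :: A)).

Lemma move_free_shorts_perm : Permutation (map short (concat (faces s'))) (seq 1 n).
Proof.
  simpl. eapply perm_trans; [apply Permutation_map, moved_arms_perm|].
  eapply perm_trans; [|exact (free_shorts_perm _ _ inv)]. apply Permutation_sym.
  eapply perm_trans; [apply Permutation_map, move_arms_perm|]. apply Permutation_refl.
Qed.

Lemma move_face_cyc_sorted f : In f (faces s') -> cyc_sorted (shorts f).
Proof.
  simpl. intros Hf. apply In_faces_after in Hf as [Hf|[Hf|[->| ->]]];
    try apply new_faces_cyc_sorted; apply (face_cyc_sorted _ _ inv); apply In_faces_before; auto.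
Qed.

Lemma move_arc_ends_proper c d : joined (arcs s') c d ->
  short c <> short d /\ 1 <= short c <= n /\ 1 <= short d <= n.
Proof.
  simpl. intros Hat. pose proof move_ends_neq. destruct move_ends_In as [Ha Hb].
  apply move_short_range in Ha, Hb.
  apply joined_cons in Hat as [[-> ->]|[[-> ->]|Hat]]; auto. apply (arc_ends_proper _ _ inv); auto.
Qed.

Lemma move_face_beside_arc c d f x : joined (arcs s') c d -> In f (faces s') ->
  In (short c) (shorts f) -> In x (shorts f) -> x <> short c -> cyc_between (short c) (short d) x.
Proof.
  simpl. intros Hat Hf Hc Hx Hne. pose proof ends_in_split_face as [HaB HbB].
  pose proof move_ends_not_in_sides as (HaX & HaY & HbX & HbY).
  apply In_faces_after in Hf as Hf'. apply joined_cons in Hat.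
  destruct Hf' as [Hold|[Hold|[->| ->]]].
  1,2: destruct Hat as [[-> ->]|[[-> ->]|Hat]];
    [exfalso; eapply other_faces_disjoint; [|exact Hc|]; auto..
    |apply (face_beside_arc _ _ inv c d f x); auto; apply In_faces_before; auto].
  - destruct Hat as [[-> ->]|[[-> ->]|Hat]].
    + apply new_face1_shorts in Hx as [Hx|Hx]; [apply side1_between; auto|congruence].
    + apply new_face1_shorts in Hc as [Hc|Hc]; [contradiction|now destruct move_ends_neq].
    + apply (face_beside_arc _ _ inv c d B x); auto using split_face_In, new_faces_in_split_face.
  - destruct Hat as [[-> ->]|[[-> ->]|Hat]].
    + apply new_face2_shorts in Hc as [Hc|Hc]; [contradiction|now destruct move_ends_neq].
    + apply new_face2_shorts in Hx as [Hx|Hx]; [apply side2_between; auto|congruence].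
    + apply (face_beside_arc _ _ inv c d B x); auto using split_face_In, new_faces_in_split_face.
Qed.

(** The free arm used at an end [i] of the new arc lies clockwise after every older arc
    [id] ([face_beside_arc]), so going clockwise from [i] the new arc's other end comes
    before [d]. *)
Lemma move_arcs_ordered_at_point c d c' d' : joined (arcs s') c d -> joined (arcs s') c' d' ->
  short c = short c' -> cyc_between (short d) (short c) (short d') -> on_left_spine c' c.
Proof.
  simpl. intros H1 H2 E C. pose proof move_ends_neq. pose proof ends_in_split_face as [HaB HbB].
  destruct move_ends_In as [Ha Hb].
  apply joined_cons in H1, H2.
  destruct H1 as [[-> ->]|[[-> ->]|H1]]; destruct H2 as [[-> ->]|[[-> ->]|H2]];
    try (unfold cyc_between in C; lia); try congruence;
    try (eapply (free_arm_newest _ _ inv); eauto; fail).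
  - exfalso.
    pose proof (face_beside_arc _ _ inv c d B (short b) H1 split_face_In ltac:(congruence) HbB
      ltac:(congruence)).
    pose proof (arc_ends_proper _ _ inv c d H1). unfold cyc_between in *; lia.
  - exfalso.
    pose proof (face_beside_arc _ _ inv c d B (short a) H1 split_face_In ltac:(congruence) HaB
      ltac:(congruence)).
    pose proof (arc_ends_proper _ _ inv c d H1). unfold cyc_between in *; lia.
  - eapply (arcs_ordered_at_point _ _ inv); eauto.
Qed.

Lemma move_free_arm_newest al c d : In al (concat (faces s')) -> joined (arcs s') c d ->
  short c = short al -> on_left_spine c al.
Proof.
  simpl. intros Hal Hat E. pose proof move_ends_neq. destruct move_ends_In as [Ha Hb].
  apply moved_arms_In in Hal. apply joined_cons in Hat.
  destruct Hal as [->|[->|Hal]]; destruct Hat as [[-> ->]|[[-> ->]|Hat]]; simpl in *;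
    try congruence; auto.
  - right. eapply (free_arm_newest _ _ inv); eauto.
  - right. eapply (free_arm_newest _ _ inv); eauto.
  - exfalso. destruct (others_shorts_neq al Hal); congruence.
  - exfalso. destruct (others_shorts_neq al Hal); congruence.
  - eapply (free_arm_newest _ _ inv); eauto using others_In.
Qed.

Lemma move_free_pair_joined x y : In (Pair x y) (concat (faces s')) -> joined (arcs s') x y.
Proof.
  simpl. intros H. apply joined_cons. apply moved_arms_In in H as [H|[H|H]].
  - injection H as -> ->. auto.
  - injection H as -> ->. auto.
  - right; right. apply (free_pair_joined _ _ inv). apply others_In; auto.
Qed.

Lemma move_arc_pair_joined x y d : joined (arcs s') (Pair x y) d -> joined (arcs s') x y.
Proof.
  simpl. intros H. apply joined_cons in H. apply joined_cons. right; right.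
  destruct move_ends_In as [Ha Hb].
  destruct H as [[E ->]|[[E ->]|H]].
  - apply (free_pair_joined _ _ inv). rewrite E. exact Ha.
  - apply (free_pair_joined _ _ inv). rewrite E. exact Hb.
  - eapply (arc_pair_joined _ _ inv); eauto.
Qed.

Lemma move_arc_pair_side x y d : joined (arcs s') (Pair x y) d ->
  cyc_between (short d) (short x) (short y).
Proof.
  simpl. intros H. apply joined_cons in H. pose proof ends_in_split_face as [HaB HbB].
  pose proof move_ends_neq. destruct move_ends_In as [Ha Hb].
  destruct H as [[E ->]|[[E ->]|H]].
  - assert (Hx : short x = short a) by (rewrite <- E; reflexivity).
    rewrite <- E in Ha. pose proof (free_pair_joined _ _ inv x y Ha) as Hxy.
    pose proof (face_beside_arc _ _ inv x y B (short b) Hxy split_face_In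
      ltac:(rewrite Hx; exact HaB) HbB ltac:(congruence)).
    pose proof (arc_ends_proper _ _ inv x y Hxy). unfold cyc_between in *; lia.
  - assert (Hx : short x = short b) by (rewrite <- E; reflexivity).
    rewrite <- E in Hb. pose proof (free_pair_joined _ _ inv x y Hb) as Hxy.
    pose proof (face_beside_arc _ _ inv x y B (short a) Hxy split_face_In
      ltac:(rewrite Hx; exact HbB) HaB ltac:(congruence)).
    pose proof (arc_ends_proper _ _ inv x y Hxy). unfold cyc_between in *; lia.
  - eapply (arc_pair_side _ _ inv); eauto.
Qed.

Lemma noncrossing_of_sides r t i j : r <> t -> i <> j ->
  ~ (cyc_between r t i /\ cyc_between t r j) -> ~ (cyc_between r t j /\ cyc_between t r i) ->
  forall p q r' t', chord i j p q -> chord r t r' t' ->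
  ~ (p < r' /\ r' < q /\ q < t') /\ ~ (r' < p /\ p < t' /\ t' < q).
Proof. unfold cyc_between, chord; intros; lia. Qed.

Lemma move_graph_noncrossing p q r t : arc_graph (arcs s') p q -> arc_graph (arcs s') r t ->
  ~ (p < r /\ r < q /\ q < t).
Proof.
  simpl. intros Hpq Hrt. pose proof move_ends_neq as Hab.
  pose proof ends_in_split_face as [HaB HbB].
  assert (Hsep : forall r t, arc_graph A r t -> forall p q r' t',
    chord (short a) (short b) p q -> chord r t r' t' ->
    ~ (p < r' /\ r' < q /\ q < t') /\ ~ (r' < p /\ p < t' /\ t' < q)).
  { intros r0 t0 Hold. apply noncrossing_of_sides; auto using old_graph_irrefl.
    - apply (arc_face_noncrossing _ _ inv r0 t0 B); auto using split_face_In.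
    - apply (arc_face_noncrossing _ _ inv r0 t0 B); auto using split_face_In. }
  apply arc_graph_cons in Hpq, Hrt.
  destruct Hpq as [[<- <-]|[[<- <-]|Hpq]]; destruct Hrt as [[<- <-]|[[<- <-]|Hrt]]; try lia;
    try (eapply proj1, (Hsep r t Hrt); unfold chord; tauto);
    try (eapply proj2, (Hsep p q Hpq); unfold chord; tauto).
  apply (graph_noncrossing _ _ inv p q r t); auto.
Qed.

Lemma move_arc_face_noncrossing p q f x y : arc_graph (arcs s') p q -> In f (faces s') ->
  In x (shorts f) -> In y (shorts f) -> ~ (cyc_between p q x /\ cyc_between q p y).
Proof.
  simpl. intros Hpq Hf Hx Hy. pose proof move_ends_neq. pose proof ends_in_split_face as [HaB HbB].
  apply arc_graph_cons in Hpq. apply In_faces_after in Hf.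
  destruct Hpq as [[<- <-]|[[<- <-]|Hpq]]; destruct Hf as [Hf|[Hf|[->| ->]]];
    try (destruct (new_face1_side x Hx), (new_face1_side y Hy); unfold cyc_between in *; lia);
    try (destruct (new_face2_side x Hx), (new_face2_side y Hy); unfold cyc_between in *; lia);
    try (apply (arc_face_noncrossing _ _ inv p q B);
         auto using split_face_In, new_faces_in_split_face; fail).
  all: try (apply (arc_face_noncrossing _ _ inv p q f); auto; apply In_faces_before; auto; fail).
  all: apply (face_face_noncrossing _ _ inv B f) with (p := x); auto using split_face_In;
    [apply In_faces_before; auto|eapply other_faces_disjoint; [|exact Hx]; auto].
Qed.

Lemma move_face_face_noncrossing f f' x y p q : In f (faces s') -> In f' (faces s') ->
  In x (shorts f) -> In y (shorts f) -> x <> y -> In p (shorts f') -> In q (shorts f') ->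
  ~ In p (shorts f) -> ~ (cyc_between x y p /\ cyc_between y x q).
Proof.
  simpl. intros Hf Hf' Hx Hy Hxy Hp Hq Hnp. pose proof move_ends_neq.
  assert (Hold : forall g, In g F1 \/ In g F2 -> In g (F1 ++ B :: F2))
    by (intros; apply In_faces_before; tauto).
  apply In_faces_after in Hf, Hf'.
  destruct Hf as [Hf|[Hf|[->| ->]]]; destruct Hf' as [Hf'|[Hf'|[->| ->]]];
    first
      [ contradiction
      | apply (face_face_noncrossing _ _ inv f f' x y p q); auto; fail
      | apply (face_face_noncrossing _ _ inv f B x y p q);
        auto using split_face_In, new_faces_in_split_face; fail
      | apply (face_face_noncrossing _ _ inv B f' x y p q);
        auto using split_face_In, new_faces_in_split_face;
        eapply other_faces_disjoint; [|exact Hp]; auto; fail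
      | idtac ].
  - destruct (new_face1_side x Hx), (new_face1_side y Hy), (new_face2_side p Hp),
      (new_face2_side q Hq); unfold cyc_between in *; lia.
  - destruct (new_face2_side x Hx), (new_face2_side y Hy), (new_face1_side p Hp),
      (new_face1_side q Hq); unfold cyc_between in *; lia.
Qed.

Lemma move_graph_face_connected x y : 1 <= x <= n -> 1 <= y <= n ->
  clos_refl_trans nat (fun p q => arc_graph (arcs s') p q \/ same_face (faces s') p q) x y.
Proof.
  simpl. intros Hx Hy. eapply clos_rt_mono; [|exact (graph_face_connected _ _ inv x y Hx Hy)].
  intros p q [Hg|(f & Hf & Hp & Hq)].
  - apply rt_step. left. apply arc_graph_cons. auto.
  - apply In_faces_before in Hf as [Hf|[Hf| ->]].
    1,2: apply rt_step; right; exists f; split; [apply In_faces_after|]; auto.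
    assert (Hsplit : forall z, In z (shorts B) -> In z (shorts B1) \/ In z (shorts B2)).
    { intros z Hz. apply split_face_shorts in Hz.
      rewrite new_face1_shorts, new_face2_shorts. tauto. }
    assert (Ha1 : In (short a) (shorts B1)) by (apply new_face1_shorts; auto).
    assert (Hb2 : In (short b) (shorts B2)) by (apply new_face2_shorts; auto).
    assert (HB1 : In B1 (F1 ++ B1 :: B2 :: F2)) by (apply In_faces_after; auto).
    assert (HB2 : In B2 (F1 ++ B1 :: B2 :: F2)) by (apply In_faces_after; auto).
    assert (Hab : arc_graph ((a, b) :: A) (short a) (short b)) by (apply arc_graph_cons; auto).
    destruct (Hsplit p Hp) as [Hp1|Hp2]; destruct (Hsplit q Hq) as [Hq1|Hq2].
    + apply rt_step. right. exists B1; auto.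
    + apply rt_trans with (short a); [apply rt_step; right; exists B1; auto|].
      apply rt_trans with (short b); [apply rt_step; left; exact Hab|].
      apply rt_step; right; exists B2; auto.
    + apply rt_trans with (short b); [apply rt_step; right; exists B2; auto|].
      apply rt_trans with (short a); [apply rt_step; left; apply arc_graph_sym, Hab|].
      apply rt_step; right; exists B1; auto.
    + apply rt_step. right. exists B2; auto.
Qed.

(** The new arc cannot close a cycle: the old arcs at its ends leave them on the far side
    of the chord, and no old arc crosses it. *)
Lemma move_graph_acyclic : acyclic (arc_graph (arcs s')).
Proof.
  simpl. pose proof move_ends_neq as Hab. pose proof ends_in_split_face as [HaB HbB].
  apply (acyclic_add_chord (arc_graph A) _ (short a) (short b) Hab).
  - intros x y. rewrite arc_graph_cons. unfold chord. intuition.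
  - exact (graph_acyclic _ _ inv).
  - intros Q p q Hn.
    assert (Hpq : p <> q) by (destruct Hn as [[-> ->]|[-> ->]]; auto).
    assert (HpB : In p (shorts B)) by (destruct Hn as [[-> ->]|[-> ->]]; auto).
    assert (HqB : In q (shorts B)) by (destruct Hn as [[-> ->]|[-> ->]]; auto).
    apply no_walk_around_chord; auto.
    + apply arc_graph_sym.
    + intros z Hz. apply arc_graph_joined in Hz as (c & d & Hcd & <- & <-).
      apply (face_beside_arc _ _ inv c d B q Hcd split_face_In HpB HqB). auto.
    + intros z Hz. apply arc_graph_joined in Hz as (c & d & Hcd & <- & <-).
      apply (face_beside_arc _ _ inv c d B p Hcd split_face_In HqB HpB). auto.
    + intros z z' Hzz C1 C2.
      apply (noncrossing_sides (arc_graph ((a, b) :: A)) q p z z' move_graph_noncrossing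
        (arc_graph_sym _) ltac:(auto)); auto.
      * apply arc_graph_cons. destruct Hn as [[-> ->]|[-> ->]]; auto.
      * apply arc_graph_cons. auto.
Qed.

Lemma invariant_move : invariant n s'.
Proof.
  constructor.
  - exact move_free_shorts_perm.
  - exact move_face_cyc_sorted.
  - exact move_arc_ends_proper.
  - exact move_face_beside_arc.
  - exact move_arcs_ordered_at_point.
  - exact move_free_arm_newest.
  - exact move_free_pair_joined.
  - exact move_arc_pair_joined.
  - exact move_arc_pair_side.
  - exact move_graph_noncrossing.
  - exact move_arc_face_noncrossing.
  - exact move_face_face_noncrossing.
  - exact move_graph_face_connected.
  - exact move_graph_acyclic.
Qed.

Variable E : nat -> nat -> Prop.
Hypothesis tree : noncrossing_tree n E.
Hypothesis follows : follows_tree n E (mkState (F1 ++ B :: F2) A).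
Hypothesis edge_ab : E (short a) (short b).
Hypothesis far_ab : farthest E (shorts B) (short a) (short b).
Hypothesis far_ba : farthest E (shorts B) (short b) (short a).

Local Notation side1 x := (x = short a \/ In x (shorts X)).
Local Notation side2 x := (x = short b \/ In x (shorts Y)).

Lemma tree_edge_across_sides x y : E x y -> side1 x -> side2 y -> x = short a /\ y = short b.
Proof.
  destruct tree as (Esym & _ & _ & _ & Enc).
  pose proof move_ends_not_in_sides as (HaX & HaY & HbX & HbY). pose proof move_ends_neq.
  intros Exy [->|Sx] [->|Sy]; auto; exfalso.
  - assert (y <> short b) by (intros ->; contradiction).
    pose proof (far_ab y ltac:(apply split_face_shorts; tauto) Exy ltac:(auto)).
    pose proof (side2_between y Sy). unfold cyc_between in *; lia.
  - assert (x <> short a) by (intros ->; contradiction).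
    pose proof (far_ba x ltac:(apply split_face_shorts; tauto) (Esym _ _ Exy) ltac:(auto)).
    pose proof (side1_between x Sx). unfold cyc_between in *; lia.
  - exact (noncrossing_sides E _ _ x y Enc Esym move_ends_neq edge_ab Exy (side1_between x Sx)
      (side2_between y Sy)).
Qed.

Lemma face_edges_split x y : clos_refl_trans nat (face_edges E B) x y ->
  (In x (shorts B1) -> In y (shorts B1) -> clos_refl_trans nat (face_edges E B1) x y) /\
  (In x (shorts B2) -> In y (shorts B2) -> clos_refl_trans nat (face_edges E B2) x y).
Proof.
  destruct tree as (Esym & _ & _ & _ & _).
  pose proof move_ends_not_in_sides as (HaX & HaY & HbX & HbY).
  intros H. apply clos_rt_rt1n in H.
  destruct (clos_rt_split_sides (face_edges E B) (face_edges E B1) (face_edges E B2)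
    (fun z => side1 z) (fun z => side2 z) (short a) (short b)) with x y as (H1 & _ & _ & H2);
    auto; rewrite ?new_face1_shorts, ?new_face2_shorts; try tauto.
  - intros z [->|Z1] [E2|Z2]; auto.
    + apply move_ends_neq; auto.
    + apply HbX. rewrite <- E2. exact Z1.
    + eapply sides_disjoint; eauto.
  - intros p q (_ & Hp & Hq). apply split_face_shorts in Hp, Hq. tauto.
  - intros p q (Epq & _ & _) Sp Sq. split; auto. rewrite !new_face1_shorts. tauto.
  - intros p q (Epq & _ & _) Sp Sq. split; auto. rewrite !new_face2_shorts. tauto.
  - intros p q (Epq & _ & _) Sp Sq. apply tree_edge_across_sides; auto.
  - intros p q (Epq & _ & _) Sp Sq.
    destruct (tree_edge_across_sides q p (Esym _ _ Epq) Sq Sp). auto.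
Qed.

Lemma follows_tree_move : follows_tree n E s'.
Proof.
  destruct tree as (Esym & _ & _ & _ & _). destruct follows as [Hr C1 C2 C3]. simpl in *.
  constructor; simpl.
  - eapply rt_trans; [exact Hr|]. apply rt_step. exact (step_intro F1 F2 u v X Y a b A split_face).
  - intros x y H. apply arc_graph_cons in H as [[<- <-]|[[<- <-]|H]]; auto.
  - intros x y Exy Hn.
    assert (Hn' : ~ arc_graph A x y) by (intro; apply Hn; apply arc_graph_cons; auto).
    destruct (C2 x y Exy Hn') as (g & Hg & Hx & Hy).
    apply In_faces_before in Hg as [Hg|[Hg| ->]].
    1,2: exists g; split; [apply In_faces_after|]; auto.
    assert (N1 : ~ (x = short a /\ y = short b))
      by (intros [-> ->]; apply Hn; apply arc_graph_cons; auto).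
    assert (N2 : ~ (x = short b /\ y = short a))
      by (intros [-> ->]; apply Hn; apply arc_graph_cons; auto).
    apply split_face_shorts in Hx, Hy.
    assert (Sx : side1 x \/ side2 x) by tauto. assert (Sy : side1 y \/ side2 y) by tauto.
    destruct Sx as [Sx|Sx]; destruct Sy as [Sy|Sy].
    + exists B1. split; [apply In_faces_after; auto|]. rewrite !new_face1_shorts. tauto.
    + exfalso. apply N1. apply tree_edge_across_sides; auto.
    + exfalso. apply N2. destruct (tree_edge_across_sides y x (Esym _ _ Exy) Sy Sx). auto.
    + exists B2. split; [apply In_faces_after; auto|]. rewrite !new_face2_shorts. tauto.
  - intros g Hg x y Hx Hy. apply In_faces_after in Hg as [Hg|[Hg|[-> | ->]]].
    1,2: apply C3; auto; apply In_faces_before; auto.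
    all: apply face_edges_split; auto; apply C3; auto using split_face_In;
      apply new_faces_in_split_face; auto.
Qed.

End Move.

Lemma invariant_step n s s' : invariant n s -> step s s' -> invariant n s'.
Proof.
  intros I Hst. destruct Hst as [F1 F2 u v X Y a b A Hvu].
  exact (invariant_move n _ _ _ _ _ _ _ _ _ Hvu I).
Qed.

Lemma reachable_invariant n s : reachable n s -> invariant n s.
Proof.
  unfold reachable. intros H. apply clos_rt_rtn1 in H. induction H.
  - apply invariant_init.
  - eapply invariant_step; eauto.
Qed.

Lemma stuck_faces_small s : (forall s', ~ step s s') -> forall f, In f (faces s) -> length f <= 1.
Proof.
  intros Hst f Hf. destruct s as [F A]; simpl in Hf.
  destruct f as [|a [|b rest]]; simpl; try lia. exfalso.
  destruct (in_split _ _ Hf) as (F1 & F2 & ->).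
  apply (Hst (mkState (F1 ++ ([] ++ [Pair a b]) :: (rest ++ [Pair b a]) :: F2) ((a, b) :: A))).
  exact (step_intro F1 F2 [] (a :: b :: rest) [] rest a b A ltac:(rewrite app_nil_r; reflexivity)).
Qed.

Theorem endstate_noncrossing_tree n s : endstate n s -> noncrossing_tree n (graph_of s).
Proof.
  intros [Hr Hst]. pose proof (reachable_invariant n s Hr) as I.
  split; [|split; [|split; [|split]]].
  - apply arc_graph_sym.
  - intros i j H. apply arc_graph_joined in H as (c & d & H & <- & <-).
    destruct (arc_ends_proper _ _ I c d H) as (H1 & H2 & H3). lia.
  - intros i j Hi Hj. eapply clos_rt_mono; [|exact (graph_face_connected _ _ I i j Hi Hj)].
    intros p q [H|(f & Hf & Hp & Hq)]; [apply rt_step; auto|].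
    pose proof (stuck_faces_small s Hst f Hf).
    destruct f as [|al [|al' f]]; simpl in *; try lia; try contradiction.
    destruct Hp as [<-|[]]; destruct Hq as [<-|[]]. apply rt_refl.
  - apply no_cycle_of_acyclic, (graph_acyclic _ _ I).
  - apply (graph_noncrossing _ _ I).
Qed.

Section SameGraph.

Variables (n : nat) (s t : state).
Hypothesis inv_s : invariant n s.
Hypothesis inv_t : invariant n t.

(** Around a boundary point, the other end of an arc drawn from an arm [Pair x _] lies
    clockwise before that of the arc from [x], whereas arcs from an original arm [Base k]
    are the oldest there. *)
Lemma base_arc_not_pair_arc k d x y d2 :
  (forall p q, arc_graph (arcs t) p q -> arc_graph (arcs s) p q) ->
  joined (arcs s) (Base k) d -> joined (arcs t) (Pair x y) d2 ->
  short x = k -> short d2 = short d -> False.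
Proof.
  intros Hg Hs Ht Ex Ed.
  pose proof (arc_pair_side _ _ inv_t x y d2 Ht) as Cp.
  assert (Hxy : arc_graph (arcs t) (short x) (short y)).
  { apply arc_graph_joined. exists x, y. split; [eapply (arc_pair_joined _ _ inv_t); eauto|auto]. }
  apply Hg, arc_graph_joined in Hxy as (cs & ds & Hcs & Ecs & Eds).
  apply (arcs_ordered_at_point _ _ inv_s (Base k) d cs ds Hs Hcs); simpl; [congruence|].
  rewrite Eds, <- Ed, <- Ex. exact Cp.
Qed.

Lemma pair_arc_order c e d c2 e2 d2 :
  (forall p q, arc_graph (arcs t) p q -> arc_graph (arcs s) p q) ->
  joined (arcs s) (Pair c e) d -> joined (arcs t) (Pair c2 e2) d2 ->
  short c2 = short c -> short d2 = short d -> ~ cyc_between (short d) (short e) (short e2).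
Proof.
  intros Hg Hs Ht Ec Ed C.
  pose proof (arc_pair_side _ _ inv_s c e d Hs) as Cp.
  pose proof (arc_pair_joined _ _ inv_s c e d Hs) as Hce.
  assert (Hce2 : arc_graph (arcs t) (short c2) (short e2)).
  { apply arc_graph_joined. exists c2, e2.
    split; [eapply (arc_pair_joined _ _ inv_t); eauto|auto]. }
  apply Hg, arc_graph_joined in Hce2 as (cs & ds & Hcs & Ecs & Eds).
  assert (O1 : on_left_spine cs (Pair c e)).
  { apply (arcs_ordered_at_point _ _ inv_s (Pair c e) d cs ds Hs Hcs); simpl; [congruence|].
    rewrite Eds. unfold cyc_between in *; lia. }
  assert (O2 : on_left_spine c cs).
  { apply (arcs_ordered_at_point _ _ inv_s cs ds c e Hcs Hce); [congruence|].
    rewrite Eds, Ecs, Ec. unfold cyc_between in *; lia. }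
  exact (on_left_spine_cycle c cs e O2 O1).
Qed.

End SameGraph.

(** By induction on [c]: for [c = Pair c' e], the short labels at the ends of the arc
    determine [short e] by [pair_arc_order], and then [c'] and [e] by induction. *)
Lemma arm_determined n s t : invariant n s -> invariant n t ->
  (forall p q, arc_graph (arcs s) p q <-> arc_graph (arcs t) p q) ->
  forall c d c2 d2, joined (arcs s) c d -> joined (arcs t) c2 d2 ->
  short c2 = short c -> short d2 = short d -> c2 = c.
Proof.
  intros Is It Hg c.
  assert (Hts : forall p q, arc_graph (arcs t) p q -> arc_graph (arcs s) p q) by apply Hg.
  assert (Hst : forall p q, arc_graph (arcs s) p q -> arc_graph (arcs t) p q) by apply Hg.
  induction c as [k|c IHc e IHe]; intros d c2 d2 Hs Ht E1 E2;
    destruct c2 as [k2|c2 e2]; simpl in E1.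
  - congruence.
  - exfalso. exact (base_arc_not_pair_arc n s t Is It k d c2 e2 d2 Hts Hs Ht E1 E2).
  - exfalso. exact (base_arc_not_pair_arc n t s It Is k2 d2 c e d Hst Ht Hs (eq_sym E1)
      (eq_sym E2)).
  - assert (Ee : short e2 = short e).
    { pose proof (arc_pair_side _ _ Is c e d Hs). pose proof (arc_pair_side _ _ It c2 e2 d2 Ht).
      pose proof (pair_arc_order n s t Is It c e d c2 e2 d2 Hts Hs Ht E1 E2).
      pose proof (pair_arc_order n t s It Is c2 e2 d2 c e d Hst Ht Hs (eq_sym E1) (eq_sym E2)).
      rewrite E1, E2 in *. unfold cyc_between in *; lia. }
    pose proof (arc_pair_joined _ _ Is c e d Hs) as Hce.
    pose proof (arc_pair_joined _ _ It c2 e2 d2 Ht) as Hce2.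
    assert (Ec : c2 = c) by (eapply IHc; eauto).
    assert (Ee2 : e2 = e) by (subst; eapply IHe; eauto using joined_sym).
    subst; reflexivity.
Qed.

Lemma graph_of_incl_long_labels n s t : (forall l, long_labels n s l -> long_labels n t l) ->
  forall i j, graph_of s i j -> graph_of t i j.
Proof.
  intros Hl i j (a & b & Hab & HH).
  assert (Hl1 : long_labels n s (Pair a b)) by (right; exists a, b; auto).
  apply Hl in Hl1 as [(k & _ & Hk)|(a' & b' & Hab' & [E|E])]; [discriminate| |].
  - injection E as -> ->. exists a', b'. auto.
  - injection E as -> ->. exists a', b'. split; auto. tauto.
Qed.

Lemma long_labels_incl_of_graph n s t : invariant n s -> invariant n t ->
  (forall p q, arc_graph (arcs s) p q <-> arc_graph (arcs t) p q) ->
  forall l, long_labels n s l -> long_labels n t l.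
Proof.
  intros Is It Hg l [Hb|(a & b & Hab & Hl)]; [left; auto|].
  assert (Hat : joined (arcs s) a b) by (left; auto).
  assert (G : arc_graph (arcs s) (short a) (short b)) by (apply arc_graph_joined; eauto).
  apply Hg, arc_graph_joined in G as (c2 & d2 & H2 & E1 & E2).
  assert (Ec : c2 = a) by (eapply (arm_determined n s t Is It Hg a b c2 d2); eauto).
  assert (Ed : d2 = b)
    by (eapply (arm_determined n s t Is It Hg b a d2 c2); eauto using joined_sym).
  subst. right. destruct H2 as [H2|H2].
  - exists a, b. auto.
  - exists b, a. split; auto. tauto.
Qed.

Theorem endstate_top_equiv_iff n s t : endstate n s -> endstate n t ->
  (top_equiv n s t <-> forall i j, graph_of s i j <-> graph_of t i j).
Proof.
  intros [Hs _] [Ht _].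
  pose proof (reachable_invariant n s Hs) as Is. pose proof (reachable_invariant n t Ht) as It.
  split.
  - intros He i j. split; apply (graph_of_incl_long_labels n); intros l; apply He.
  - intros Hg l.
    assert (Hg' : forall p q, arc_graph (arcs s) p q <-> arc_graph (arcs t) p q) by exact Hg.
    split; apply long_labels_incl_of_graph; auto. intros p q; symmetry; apply Hg'.
Qed.

Lemma exists_max_in_list (P : nat -> Prop) (g : nat -> nat) (l : list nat) :
  (exists y, In y l /\ P y) ->
  exists y, In y l /\ P y /\ forall y', In y' l -> P y' -> g y' <= g y.
Proof.
  induction l as [|x l IH]; intros Hex.
  - destruct Hex as (y & [] & _).
  - destruct (classic (exists y, In y l /\ P y)) as [H|H].
    + destruct (IH H) as (y & Hy & Py & Hm).
      destruct (classic (P x /\ g y < g x)) as [Hx|Hx].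
      * exists x. split; [simpl; auto|]. split; [tauto|].
        intros y' [<-|Hy'] Py'; [lia|]. specialize (Hm y' Hy' Py'). lia.
      * exists y. split; [simpl; auto|]. split; auto.
        intros y' [<-|Hy'] Py'; auto. apply NNPP; intro C; apply Hx; split; auto; lia.
    + destruct Hex as (y & [Ey|Hy] & Py); [subst y|exfalso; apply H; eauto].
      exists x. split; [simpl; auto|]. split; auto.
      intros y' [<-|Hy'] Py'; [lia|]. exfalso; apply H; eauto.
Qed.

Definition cw_dist (K x y : nat) : nat := if Nat.ltb x y then y - x else y + K - x.

Lemma cw_dist_le_between K x y y' : x < K -> y < K -> y' < K -> y <> x -> y' <> x -> y' <> y ->
  cw_dist K x y' <= cw_dist K x y -> cyc_between x y y'.
Proof.
  unfold cw_dist, cyc_between. destruct (Nat.ltb_spec x y); destruct (Nat.ltb_spec x y'); lia.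
Qed.

Lemma farthest_exists (E : nat -> nat -> Prop) L K x : (forall z, In z L -> z < K) -> In x L ->
  (forall y, E x y -> y <> x) -> (exists z, In z L /\ E x z) ->
  exists y, In y L /\ E x y /\ farthest E L x y.
Proof.
  intros HK Hx Hirr Hex.
  destruct (exists_max_in_list (E x) (cw_dist K x) L Hex) as (y & Hy & Ey & Hm).
  exists y. split; auto. split; auto. intros y' Hy' Ey' Ne.
  apply cw_dist_le_between with K; auto.
Qed.

Lemma forest_walk_NoDup (E : nat -> nat -> Prop) (xs : nat -> nat) :
  (forall x y, E x y -> x <> y) ->
  (forall x l, NoDup (x :: l) -> 2 <= length l -> ~ walk E (x :: l ++ [x])) ->
  (forall t, E (xs t) (xs (S t))) -> (forall t, xs (S (S t)) <> xs t) ->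
  forall t, NoDup (map xs (seq 0 t)).
Proof.
  intros Hirr Hac Hstep Hback.
  induction t as [|t IH]; [constructor|].
  rewrite seq_S, map_app. simpl. apply NoDup_app; auto; [constructor; auto; constructor|].
  intros z Hz [Ez|[]]. apply in_map_iff in Hz as (p & Hp & Hpin).
  apply in_seq in Hpin. rewrite <- Ez in Hp.
  destruct (Nat.eq_dec t (S p)) as [->|N1].
  - specialize (Hstep p). rewrite Hp in Hstep. exact (Hirr _ _ Hstep eq_refl).
  - destruct (Nat.eq_dec t (S (S p))) as [->|N2]; [exact (Hback p (eq_sym Hp))|].
    assert (Hseg : map xs (seq p (S (t - p))) = xs p :: map xs (seq (S p) (t - p - 1)) ++ [xs p]).
    { rewrite seq_S, map_app. cbn [map]. replace (p + (t - p)) with t by lia. rewrite <- Hp.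
      replace (t - p) with (S (t - p - 1)) at 1 by lia. reflexivity. }
    apply (Hac (xs p) (map xs (seq (S p) (t - p - 1)))).
    + replace t with (p + (t - p)) in IH by lia.
      rewrite seq_app, map_app in IH. apply NoDup_app_remove_l in IH.
      replace (t - p) with (S (t - p - 1)) in IH by lia. exact IH.
    + rewrite length_map, length_seq. lia.
    + rewrite <- Hseg. apply walk_map_seq. exact Hstep.
Qed.

(** Iterating "go to the farthest neighbour" must turn back on some edge, by
    [forest_walk_NoDup] and the pigeonhole principle; that edge is mutually farthest. *)
Lemma exists_mutually_farthest_edge (E : nat -> nat -> Prop) L K :
  (forall x y, E x y -> E y x) -> (forall x y, E x y -> x <> y) ->
  (forall x l, NoDup (x :: l) -> 2 <= length l -> ~ walk E (x :: l ++ [x])) ->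
  (forall z, In z L -> z < K) -> (exists x y, In x L /\ In y L /\ E x y) ->
  exists i j, In i L /\ In j L /\ E i j /\ farthest E L i j /\ farthest E L j i.
Proof.
  intros Hsym Hirr Hac HK (x0 & y0 & Hx0 & Hy0 & E0).
  set (active := fun x => In x L /\ exists z, In z L /\ E x z).
  assert (Hf : forall x, exists y, active x -> In y L /\ E x y /\ farthest E L x y).
  { intros x. destruct (classic (active x)) as [[Hx Hz]|Hp]; [|exists 0; tauto].
    destruct (farthest_exists E L K x HK Hx ltac:(intros y Hy; apply not_eq_sym; auto) Hz)
      as (y & Hy). exists y; auto. }
  set (fr := fun x => proj1_sig (constructive_indefinite_description _ (Hf x))).
  assert (Hfr : forall x, active x -> In (fr x) L /\ E x (fr x) /\ farthest E L x (fr x)).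
  { intros x. unfold fr. destruct (constructive_indefinite_description _ (Hf x)); simpl; auto. }
  set (xs := fun t => Nat.iter t fr x0).
  assert (Hactive : forall t, active (xs t)).
  { induction t as [|t IH]; [split; eauto|].
    destruct (Hfr _ IH) as (H1 & H2 & H3). change (xs (S t)) with (fr (xs t)).
    split; auto. exists (xs t). split; [apply IH|]. apply Hsym; auto. }
  assert (Hstep : forall t, E (xs t) (xs (S t)) /\ farthest E L (xs t) (xs (S t)))
    by (intros t; destruct (Hfr _ (Hactive t)) as (_ & H2 & H3); auto).
  destruct (classic (exists t, xs (S (S t)) = xs t)) as [(t & Ht)|Hno].
  - exists (xs t), (xs (S t)). split; [apply Hactive|]. split; [apply Hactive|].
    split; [apply Hstep|]. split; [apply Hstep|]. rewrite <- Ht. apply Hstep.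
  - exfalso.
    assert (HND := forest_walk_NoDup E xs Hirr Hac (fun t => proj1 (Hstep t))
      (fun t Ht => Hno (ex_intro _ t Ht)) (S (length L))).
    assert (Hincl : incl (map xs (seq 0 (S (length L)))) L).
    { intros z Hz. apply in_map_iff in Hz as (t & <- & _). apply Hactive. }
    pose proof (NoDup_incl_length HND Hincl) as Hl.
    rewrite length_map, length_seq in Hl. lia.
Qed.

(** A move replaces a face with [k] arms by two faces with [k] arms in total, so it
    lowers the potential by one. *)
Fixpoint potential (F : list (list lab)) : nat :=
  match F with [] => 0 | f :: F' => (length f - 1) + potential F' end.

Lemma potential_app F1 F2 : potential (F1 ++ F2) = potential F1 + potential F2.
Proof. induction F1; simpl; lia. Qed.

Lemma face_shorts_NoDup n s f : invariant n s -> In f (faces s) -> NoDup (shorts f).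
Proof.
  intros I Hf. destruct (in_split _ _ Hf) as (F1 & F2 & EF).
  assert (H : NoDup (map short (concat (faces s)))).
  { eapply Permutation_NoDup; [apply Permutation_sym, (free_shorts_perm _ _ I)|].
    apply seq_NoDup. }
  rewrite EF, concat_app, !map_app in H. simpl in H. rewrite map_app in H.
  apply NoDup_app_remove_l, NoDup_app_remove_r in H. exact H.
Qed.

Lemma face_shorts_range n s f z : invariant n s -> In f (faces s) -> In z (shorts f) -> 1 <= z <= n.
Proof.
  intros I Hf Hz. apply in_map_iff in Hz as (al & <- & Hal).
  assert (Hin : In (short al) (seq 1 n)).
  { eapply Permutation_in; [exact (free_shorts_perm _ _ I)|]. apply in_map, in_concat; eauto. }
  apply in_seq in Hin. lia.
Qed.

Lemma face_has_tree_edge n E s f : follows_tree n E s -> In f (faces s) -> 2 <= length f ->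
  exists x y, In x (shorts f) /\ In y (shorts f) /\ E x y.
Proof.
  intros HC Hf Hlen.
  pose proof (face_shorts_NoDup n s f (reachable_invariant n s (follows_reachable _ _ _ HC)) Hf)
    as HN.
  destruct f as [|a [|b rest]]; simpl in Hlen; try lia.
  assert (Hab : short a <> short b).
  { intros Eab. inversion HN as [|? ? Ha _]. apply Ha. rewrite Eab. simpl; auto. }
  pose proof (follows_face_connected _ _ _ HC _ Hf (short a) (short b)) as Hc.
  apply clos_rt_rt1n in Hc; [|simpl; auto..].
  inversion Hc as [Heq|z ? Hz]; [congruence|].
  destruct Hz as (Haz & _ & Hz). exists (short a), z. simpl; auto.
Qed.

(** Playing a mutually farthest edge of the tree inside a face keeps following the tree. *)
Lemma follows_tree_step n E s f : noncrossing_tree n E -> follows_tree n E s ->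
  In f (faces s) -> 2 <= length f ->
  exists s', follows_tree n E s' /\ potential (faces s') < potential (faces s).
Proof.
  intros HE HC Hf Hlen.
  pose proof (reachable_invariant n s (follows_reachable _ _ _ HC)) as I.
  pose proof HE as (Esym & Erng & _ & Eac & _).
  destruct (exists_mutually_farthest_edge E (shorts f) (S n) Esym
    (fun x y H => proj2 (proj2 (Erng x y H))) Eac
    (fun z Hz => le_n_S _ _ (proj2 (face_shorts_range n s f z I Hf Hz)))
    (face_has_tree_edge n E s f HC Hf Hlen))
    as (i & j & Hi & Hj & Eij & Fij & Fji).
  apply in_map_iff in Hi as (a & <- & Ha). apply in_map_iff in Hj as (b & <- & Hb).
  destruct (in_split _ _ Ha) as (f1 & f2 & Ef).
  assert (Hb' : In b (f2 ++ f1)).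
  { rewrite Ef in Hb. apply in_app_iff in Hb as [Hb|[<-|Hb]]; apply in_app_iff; auto.
    exfalso. exact (proj2 (proj2 (Erng _ _ Eij)) eq_refl). }
  destruct (in_split _ _ Hb') as (X & Y & EXY).
  assert (Hvu : (a :: f2) ++ f1 = a :: X ++ b :: Y) by (simpl; rewrite EXY; reflexivity).
  destruct s as [F A]. simpl in *.
  destruct (in_split _ _ Hf) as (F1 & F2 & ->).
  exists (mkState (F1 ++ (X ++ [Pair a b]) :: (Y ++ [Pair b a]) :: F2) ((a, b) :: A)).
  subst f. split.
  - apply (follows_tree_move n F1 F2 f1 (a :: f2) X Y a b A Hvu I E); auto.
  - simpl. rewrite !potential_app. simpl.
    pose proof (f_equal (@length lab) Hvu) as Hl. simpl in Hl.
    rewrite !length_app in *. simpl in *. lia.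
Qed.

Lemma follows_tree_init n E : noncrossing_tree n E -> follows_tree n E (init n).
Proof.
  intros (Esym & Erng & Econn & _ & _).
  constructor; simpl.
  - apply rt_refl.
  - intros x y H. exfalso; eapply arc_graph_nil; eauto.
  - intros x y Exy _. exists (map Base (seq 1 n)). rewrite shorts_init.
    destruct (Erng x y Exy) as (H1 & H2 & _). split; [simpl; auto|]. rewrite !in_seq. lia.
  - intros f [<-|[]] x y Hx Hy. rewrite shorts_init in Hx, Hy. apply in_seq in Hx, Hy.
    eapply clos_rt_mono; [|apply Econn; lia].
    intros u w Euw. apply rt_step. split; auto. rewrite shorts_init, !in_seq.
    destruct (Erng u w Euw). lia.
Qed.

Lemma follows_tree_end n E s : noncrossing_tree n E -> follows_tree n E s ->
  (forall f, In f (faces s) -> length f <= 1) ->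
  endstate n s /\ forall i j, graph_of s i j <-> E i j.
Proof.
  intros (_ & Erng & _ & _ & _) [Hr C1 C2 C3] Hl.
  split; [split; auto|].
  - intros s' Hst. inversion Hst; subst. simpl in Hl.
    assert (L := Hl (u ++ v) ltac:(apply in_app_iff; simpl; auto)).
    assert (L2 : length (v ++ u) = length (a :: X ++ b :: Y)) by (rewrite H; auto).
    rewrite !length_app in L, L2. simpl in L2. rewrite length_app in L2. simpl in L2. lia.
  - intros i j. split; [apply C1|].
    intros Eij. destruct (classic (arc_graph (arcs s) i j)) as [G|G]; [exact G|].
    exfalso. destruct (C2 i j Eij G) as (g & Hg & Hi & Hj).
    pose proof (Hl g Hg).
    destruct g as [|al [|al' g]]; simpl in *; try lia; try contradiction.
    destruct Hi as [<-|[]]; destruct Hj as [Hj|[]].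
    destruct (Erng _ _ Eij) as (_ & _ & Ne). congruence.
Qed.

Lemma follows_tree_complete n E s : noncrossing_tree n E -> follows_tree n E s ->
  exists s', endstate n s' /\ forall i j, graph_of s' i j <-> E i j.
Proof.
  intros HE. remember (potential (faces s)) as k eqn:Hk. revert s Hk.
  induction k as [k IH] using lt_wf_ind. intros s -> HC.
  destruct (classic (exists f, In f (faces s) /\ 2 <= length f)) as [(f & Hf & Hl)|Hno].
  - destruct (follows_tree_step n E s f HE HC Hf Hl) as (s' & HC' & Hlt).
    exact (IH _ Hlt s' eq_refl HC').
  - exists s. apply follows_tree_end; auto. intros f Hf.
    apply Nat.nlt_ge. intros Hl. apply Hno. exists f. split; [auto|lia].
Qed.

Theorem theorem1 (n : nat) (Hn : 1 <= n) :
  (* every endstate is mapped to a noncrossing tree on 1..n *)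
  (forall s, endstate n s -> noncrossing_tree n (graph_of s)) /\
  (* the map is well defined and injective on topological classes *)
  (forall s t, endstate n s -> endstate n t ->
     (top_equiv n s t <-> forall i j, graph_of s i j <-> graph_of t i j)) /\
  (* the map is surjective onto noncrossing trees *)
  (forall E : nat -> nat -> Prop, noncrossing_tree n E ->
     exists s, endstate n s /\ forall i j, graph_of s i j <-> E i j).
Proof.
  split; [|split].
  - apply endstate_noncrossing_tree.
  - apply endstate_top_equiv_iff.
  - intros E HE.
    exact (follows_tree_complete n E (init n) HE (follows_tree_init n E HE)).
Qed.
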